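(* Let $k\ge3$. Let $C$ and $C'$ be cycles of length $2k$ with $E(C)\cap E(C')=\emptyset$ and $V(C)\cap V(C')\neq\emptyset$. If $H:=C\cup C'$ has girth at least $2k-2$, then $H$ can be decomposed into two paths, each of length $2k$.
   Context: Graphs are finite and simple; length = number of edges; girth = length of a shortest cycle. A decomposition of a graph is a set of subgraphs whose edge sets partition its edge set. *)

(* Simple graphs on a finite vertex type T are given by
   their edge sets: an edge is an unordered pair, i.e. a 2-element {set T}. *)
From mathcomp Require Import all_boot.
Set Implicit Arguments. Unset Strict Implicit. Unset Printing Implicit Defensive.

Section Graphs.
Variable T : finType.

Definition cycle_edges (c : seq T) : {set {set T}} :=
  [set [set x; next c x] | x in c].

Definition path_edges (p : seq T) : {set {set T}} :=
  [set [set xy.1; xy.2] | xy in zip p (behead p)].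

Definition is_cycle_seq (c : seq T) (n : nat) : Prop :=
  uniq c /\ 3 <= size c /\ size c = n.

Definition is_path_seq (p : seq T) (n : nat) : Prop :=
  uniq p /\ size p = n.+1.

Definition girth_atleast (E : {set {set T}}) (g : nat) : Prop :=
  forall d : seq T, uniq d -> 3 <= size d -> cycle_edges d \subset E ->
    g <= size d.

End Graphs.

(* Pick a common vertex v and read C and C' as closed walks v x_1 ... x_(2k-1) v
   and v y_1 ... y_(2k-1) v.  The walks x_1 ... x_(2k-1) v y_1 and
   y_1 ... y_(2k-1) v x_1 are edge-disjoint and cover C u C'; they are paths as
   soon as x_1 is not on C' and y_1 is not on C.  An edge v x of C with x on C'
   is a chord of C' cutting it into cycles of lengths i + 2 and 2k - i, where
   x = y_(i+1); girth >= 2k - 2 forces i = 2.  So the two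
   neighbours of v on C are not both on C', and reversing C if necessary makes
   x_1 avoid C'; symmetrically for y_1. *)

From mathcomp Require Import all_boot zify.
Set Implicit Arguments. Unset Strict Implicit. Unset Printing Implicit Defensive.

Section PathEdges.
Variable T : finType.
Implicit Types (s t : seq T) (x y v : T).

Lemma path_edges_nil : path_edges [::] = set0 :> {set {set T}}.
Proof. by apply/setP => e; rewrite inE; apply/negbTE/imsetP => -[]. Qed.

Lemma path_edges1 x : path_edges [:: x] = set0.
Proof. by apply/setP => e; rewrite inE; apply/negbTE/imsetP => -[]. Qed.

Lemma path_edges_cons2 x y s :
  path_edges [:: x, y & s] = [set x; y] |: path_edges (y :: s).
Proof.
apply/setP => e; rewrite in_setU1; apply/imsetP/idP.
  move=> [xy]; rewrite in_cons => /orP [/eqP -> -> /=|xy_s ->]; first by rewrite eqxx.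
  by apply/orP; right; apply/imsetP; exists xy.
case/orP => [/eqP ->| /imsetP [xy xy_s ->]]; first by exists (x, y); rewrite ?mem_head.
by exists xy; rewrite // in_cons xy_s orbT.
Qed.

Lemma path_edges_cons x s :
  path_edges (x :: s) =
  path_edges s :|: (if s is y :: _ then [set [set x; y]] else set0).
Proof.
case: s => [|y s]; first by rewrite path_edges1 path_edges_nil setU0.
by rewrite path_edges_cons2 setUC.
Qed.

Lemma path_edges_rcons2 s x y :
  path_edges (rcons (rcons s x) y) = [set x; y] |: path_edges (rcons s x).
Proof.
elim: s => [|z s IHs]; first by rewrite /= path_edges_cons2 !path_edges1.
rewrite !rcons_cons path_edges_cons IHs [path_edges (z :: _)]path_edges_cons.
by case: s {IHs} => [|t s] /=; rewrite setUA.
Qed.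

Lemma path_edges_rev s : path_edges (rev s) = path_edges s.
Proof.
elim: s => [|x [|y s] IHs] //.
rewrite rev_cons [rev (y :: s)]rev_cons path_edges_rcons2 -rev_cons IHs.
by rewrite path_edges_cons2 [[set y; x]]setUC.
Qed.

Lemma path_edges_catl s t : path_edges s \subset path_edges (s ++ t).
Proof.
elim: s => [|x s IHs]; first by rewrite path_edges_nil sub0set.
rewrite /= !path_edges_cons; apply: setUSS => //.
by case: s {IHs} => [|y s] /=; rewrite ?sub0set.
Qed.

Lemma path_edges_catr s t : path_edges t \subset path_edges (s ++ t).
Proof.
elim: s => [|x s IHs] //=.
by rewrite path_edges_cons; apply: subset_trans IHs (subsetUl _ _).
Qed.

Lemma mem_path_edges s e x : e \in path_edges s -> x \in e -> x \in s.
Proof.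
elim: s => [|y s IHs]; first by rewrite path_edges_nil inE.
rewrite path_edges_cons in_setU => /orP [/IHs x_s /x_s|].
  by rewrite in_cons => ->; rewrite orbT.
case: s {IHs} => [|z s]; rewrite ?inE // => /eqP -> /set2P [] ->;
  by rewrite eqxx ?orbT.
Qed.

Lemma ends_notin_path_edges x y s : uniq (x :: rcons s y) -> 0 < size s ->
  [set x; y] \notin path_edges (x :: rcons s y).
Proof.
case: s => [|z s] //= /andP [x_zs /andP [z_s _]] _.
rewrite path_edges_cons2 in_setU1 negb_or; apply/andP; split.
  apply/eqP => /setP /(_ y); rewrite set22 => /esym /set2P [yx|yz].
    by move: x_zs; rewrite yx in_cons mem_rcons mem_head orbT.
  by move: z_s; rewrite yz mem_rcons mem_head.
by apply/negP => /mem_path_edges /(_ (set21 x y)); apply/negP.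
Qed.

Lemma zip_rcons_next x s : uniq (x :: s) ->
  zip (x :: rcons s x) (rcons s x) = [seq (y, next (x :: s) y) | y <- x :: s].
Proof.
move=> xs_uniq.
have size_zip_walk : size (zip (x :: rcons s x) (rcons s x)) = (size s).+1.
  by rewrite size_zip /= size_rcons (minn_idPr (leqnSn _)).
apply: (eq_from_nth (x0 := (x, x))); first by rewrite size_zip_walk size_map.
rewrite size_zip_walk => i lt_i_s; rewrite nth_zip_cond size_zip_walk lt_i_s.
rewrite (nth_map x) // next_nth mem_nth // index_uniq // -rcons_cons !nth_rcons /=.
rewrite !if_same; case: i lt_i_s => [|i] lt_i_s /=; rewrite ?lt_i_s;
  by case: ltnP => // le_s_i; rewrite (nth_default _ le_s_i).
Qed.

Lemma cycle_edges_closed_walk x s : uniq (x :: s) ->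
  cycle_edges (x :: s) = path_edges (x :: rcons s x).
Proof.
move=> xs_uniq; rewrite /path_edges /= zip_rcons_next //.
apply/setP => e; apply/imsetP/imsetP => [[y ys ->]|[_ /mapP [y ys ->] ->]].
  by exists (y, next (x :: s) y) => //; apply: map_f.
by exists y.
Qed.

Lemma cycle_edges_rot n s : uniq s -> cycle_edges (rot n s) = cycle_edges s.
Proof.
move=> s_uniq; apply/setP => e; apply/imsetP/imsetP => -[y ys ->];
  by exists y; rewrite ?mem_rot ?next_rot // -(mem_rot n).
Qed.

Lemma cycle_edges_at c v : uniq c -> v \in c -> exists xs,
  [/\ uniq (v :: xs), (size xs).+1 = size c
    & cycle_edges c = path_edges (v :: rcons xs v)].
Proof.
move=> c_uniq vc; have rot_c := rot_index vc.
set xs := (drop _ _ ++ _) in rot_c; exists xs.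
have xs_uniq : uniq (v :: xs) by rewrite -rot_c rot_uniq.
split => //; first by rewrite -(size_rot (index v c) c) rot_c.
by rewrite -(cycle_edges_rot (index v c) c_uniq) rot_c cycle_edges_closed_walk.
Qed.

Lemma closed_walks_swap_tails v x1 y1 xs ys :
  uniq (v :: x1 :: xs) -> uniq (v :: y1 :: ys) ->
  x1 \notin y1 :: ys -> y1 \notin x1 :: xs -> 0 < size xs -> 0 < size ys ->
  [disjoint path_edges (v :: x1 :: rcons xs v) & path_edges (v :: y1 :: rcons ys v)] ->
  let p1 := rcons (rcons (x1 :: xs) v) y1 in let p2 := rcons (rcons (y1 :: ys) v) x1 in
  [/\ uniq p1, uniq p2, [disjoint path_edges p1 & path_edges p2] &
    path_edges p1 :|: path_edges p2 =
    path_edges (v :: x1 :: rcons xs v) :|: path_edges (v :: y1 :: rcons ys v)].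
Proof.
move=> X_uniq Y_uniq x1_Y y1_X xs_pos ys_pos XY_disj p1 p2.
have tail_uniq z1 zs w1 : uniq (v :: z1 :: zs) -> w1 \notin z1 :: zs -> w1 != v ->
    uniq (rcons (rcons (z1 :: zs) v) w1).
  move=> /andP [v_zs zs_uniq] w1_zs w1_v.
  by rewrite !rcons_uniq mem_rcons in_cons negb_or w1_v w1_zs v_zs.
have [v_X v_Y] : v \notin x1 :: xs /\ v \notin y1 :: ys.
  by case/andP: X_uniq; case/andP: Y_uniq.
have first_notin_tail z1 zs : uniq (v :: z1 :: zs) -> 0 < size zs ->
    [set v; z1] \notin path_edges (z1 :: rcons zs v).
  move=> zs_uniq zs_pos; rewrite setUC ends_notin_path_edges //.
  by rewrite -rcons_cons rcons_uniq.
have vx_X := first_notin_tail _ _ X_uniq xs_pos.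
have vy_Y := first_notin_tail _ _ Y_uniq ys_pos.
rewrite /p1 /p2 !path_edges_rcons2 !rcons_cons !path_edges_cons2 in XY_disj *.
have x1_v : x1 != v by apply: contraNneq v_X => <-; exact: mem_head.
have y1_v : y1 != v by apply: contraNneq v_Y => <-; exact: mem_head.
split; [exact: tail_uniq | exact: tail_uniq | |].
  apply/pred0P => e /=; apply/negbTE/negP => /andP [].
  rewrite !in_setU1 => /orP [/eqP ->|e_X] /orP [/eqP e_y|e_Y].
  - by move: (disjointFr XY_disj (setU11 _ _)); rewrite -e_y setU11.
  - by rewrite e_Y in vy_Y.
  - by move: e_X; rewrite e_y (negbTE vx_X).
  - by move: (disjointFr XY_disj (setU1r _ e_X)); rewrite in_setU1 e_Y orbT.
by rewrite setUACA [in RHS]setUACA [[set [set v; y1]] :|: _]setUC.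
Qed.

End PathEdges.

Section Girth.
Variables (T : finType) (E : {set {set T}}).
Implicit Types (s t xs ys : seq T) (x v : T).

Lemma girth_chord_bounds g v s x t :
  uniq (v :: s ++ x :: t) -> path_edges (v :: rcons (s ++ x :: t) v) \subset E ->
  [set v; x] \in E -> [set v; x] \notin path_edges (v :: rcons (s ++ x :: t) v) ->
  girth_atleast E g -> g <= (size s).+2 /\ g <= (size t).+2.
Proof.
move=> w_uniq w_sub vx_E vx_w girthE.
(* The chord splits the closed walk into the cycles v s x and v x t. *)
have w_pre : v :: rcons (s ++ x :: t) v = (v :: rcons s x) ++ rcons t v.
  by rewrite rcons_cat cat_cons cat_rcons.
have w_suf : v :: rcons (s ++ x :: t) v = (v :: s) ++ x :: rcons t v.
  by rewrite rcons_cat.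
have vx_sym : [set x; v] = [set v; x] by rewrite setUC.
split.
  have d_uniq : uniq (v :: rcons s x).
    by apply: subseq_uniq w_uniq; rewrite -cat_rcons -cat_cons prefix_subseq.
  have d_size : size (v :: rcons s x) = (size s).+2 by rewrite /= size_rcons.
  rewrite -d_size; apply: girthE => //.
    rewrite d_size !ltnS lt0n; apply: contraNneq vx_w => /size0nil ->.
    by rewrite path_edges_cons2 setU11.
  rewrite cycle_edges_closed_walk // -!rcons_cons path_edges_rcons2 vx_sym rcons_cons.
  rewrite subUset sub1set vx_E /=; apply: subset_trans w_sub.
  by rewrite w_pre path_edges_catl.
have d_uniq : uniq (v :: x :: t).
  apply: subseq_uniq w_uniq.
  by rewrite -cat1s -cat_cons cat_subseq // sub1seq mem_head.
rewrite -[(size t).+2]/(size (v :: x :: t)); apply: girthE => //.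
  rewrite /= !ltnS lt0n; apply: contraNneq vx_w => /size0nil t0.
  rewrite w_suf t0 -vx_sym; apply: subsetP (path_edges_catr _ _) _ _.
  by rewrite path_edges_cons2 setU11.
rewrite cycle_edges_closed_walk // rcons_cons path_edges_cons2.
rewrite subUset sub1set vx_E /=; apply: subset_trans w_sub.
by rewrite w_suf path_edges_catr.
Qed.

Lemma girth_chord_index k v x ys :
  3 <= k -> x \in ys -> uniq (v :: ys) -> (size ys).+1 = 2 * k ->
  path_edges (v :: rcons ys v) \subset E ->
  [set v; x] \in E -> [set v; x] \notin path_edges (v :: rcons ys v) ->
  girth_atleast E (2 * k - 2) -> index x ys = 2.
Proof.
move=> k3 /splitPr [s t] w_uniq size_w w_sub vx_E vx_w girthE.
have [le_s le_t] := girth_chord_bounds w_uniq w_sub vx_E vx_w girthE.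
have x_s : x \notin s.
  by move: w_uniq; rewrite /= cat_uniq /= => /and4P [_ _ /norP []].
move: size_w; rewrite index_cat (negbTE x_s) /= eqxx addn0 size_cat /=.
lia.
Qed.

Lemma closed_walk_end_off k v xs ys :
  3 <= k -> 1 < size xs -> uniq (v :: xs) -> uniq (v :: ys) -> (size ys).+1 = 2 * k ->
  path_edges (v :: rcons xs v) \subset E -> path_edges (v :: rcons ys v) \subset E ->
  [disjoint path_edges (v :: rcons xs v) & path_edges (v :: rcons ys v)] ->
  girth_atleast E (2 * k - 2) -> (head v xs \notin ys) || (last v xs \notin ys).
Proof.
move=> k3 + xs_uniq ys_uniq size_ys + Y_sub XY_disj girthE.
case: xs xs_uniq XY_disj => [|h [|y r]] //= hry_uniq XY_disj _ X_sub.
have chord_index z : [set v; z] \in path_edges [:: v, h, y & rcons r v] ->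
    z \in ys -> index z ys = 2.
  move=> vz_X z_ys; apply: girth_chord_index z_ys ys_uniq size_ys Y_sub _ _ girthE => //.
    exact: subsetP X_sub _ vz_X.
  by rewrite (disjointFr XY_disj vz_X).
have first_edge : [set v; h] \in path_edges [:: v, h, y & rcons r v].
  by rewrite path_edges_cons2 setU11.
have last_edge : [set v; last y r] \in path_edges [:: v, h, y & rcons r v].
  rewrite -!rcons_cons (lastI y r) -!rcons_cons path_edges_rcons2.
  by rewrite [[set v; _]]setUC setU11.
rewrite -negb_and; apply/negP => /andP [h_ys l_ys].
have h_last : h = last y r.
  by rewrite -[LHS](nth_index v h_ys) -[RHS](nth_index v l_ys) !chord_index.
by move: hry_uniq; rewrite h_last mem_last /= andbF.
Qed.

Lemma closed_walk_orient_off k v xs ys :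
  3 <= k -> 1 < size xs -> uniq (v :: xs) -> uniq (v :: ys) -> (size ys).+1 = 2 * k ->
  path_edges (v :: rcons xs v) \subset E -> path_edges (v :: rcons ys v) \subset E ->
  [disjoint path_edges (v :: rcons xs v) & path_edges (v :: rcons ys v)] ->
  girth_atleast E (2 * k - 2) ->
  exists x1 xs', [/\ uniq (v :: x1 :: xs'), x1 :: xs' =i xs, (size xs').+1 = size xs,
    path_edges (v :: x1 :: rcons xs' v) = path_edges (v :: rcons xs v) & x1 \notin ys].
Proof.
move=> k3 xs_size xs_uniq ys_uniq size_ys X_sub Y_sub XY_disj girthE.
have orient xs' : head v xs' \notin ys -> uniq (v :: xs') -> xs' =i xs ->
    size xs' = size xs -> path_edges (v :: rcons xs' v) = path_edges (v :: rcons xs v) ->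
  exists x1 xs2, [/\ uniq (v :: x1 :: xs2), x1 :: xs2 =i xs, (size xs2).+1 = size xs,
    path_edges (v :: x1 :: rcons xs2 v) = path_edges (v :: rcons xs v) & x1 \notin ys].
  case: xs' => [|x1 xs2] /= x1_ys; last by move=> ? ? <- ?; exists x1, xs2.
  by move=> _ _ size0; rewrite -size0 in xs_size.
have := closed_walk_end_off k3 xs_size xs_uniq ys_uniq size_ys X_sub Y_sub XY_disj girthE.
case/orP=> [h_ys|l_ys]; first exact: orient xs h_ys xs_uniq (frefl _) erefl erefl.
apply: (orient (rev xs)); rewrite ?size_rev //.
- case/lastP: xs {xs_size xs_uniq X_sub XY_disj orient} l_ys => // b l.
  by rewrite rev_rcons last_rcons.
- by rewrite /= mem_rev rev_uniq.
- exact: mem_rev.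
by rewrite -path_edges_rev rev_cons rev_rcons revK.
Qed.

End Girth.

Theorem mainTheorem10 (T : finType) (k : nat) (c c' : seq T) :
  3 <= k ->
  is_cycle_seq c (2 * k) -> is_cycle_seq c' (2 * k) ->
  [disjoint cycle_edges c & cycle_edges c'] ->
  (exists v, v \in c /\ v \in c') ->
  girth_atleast (cycle_edges c :|: cycle_edges c') (2 * k - 2) ->
  exists p1 p2 : seq T,
    is_path_seq p1 (2 * k) /\ is_path_seq p2 (2 * k) /\
    [disjoint path_edges p1 & path_edges p2] /\
    path_edges p1 :|: path_edges p2 = cycle_edges c :|: cycle_edges c'.
Proof.
move=> k3 [c_uniq [_ size_c]] [c'_uniq [_ size_c']] cc'_disj [v [vc vc']] girthH.
have [xs [xs_uniq size_xs Ec]] := cycle_edges_at c_uniq vc.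
have [ys [ys_uniq size_ys Ec']] := cycle_edges_at c'_uniq vc'.
rewrite size_c in size_xs; rewrite size_c' in size_ys.
rewrite {}Ec {}Ec' in cc'_disj girthH *.
have xs_size : 1 < size xs by lia.
have ys_size : 1 < size ys by lia.
have [x1 [xs2 [X_uniq X_mem size_xs2 X_edges x1_ys]]] :=
  closed_walk_orient_off k3 xs_size xs_uniq ys_uniq size_ys
    (subsetUl _ _) (subsetUr _ _) cc'_disj girthH.
have [y1 [ys2 [Y_uniq Y_mem size_ys2 Y_edges y1_xs]]] :=
  closed_walk_orient_off k3 ys_size ys_uniq xs_uniq size_xs
    (subsetUr _ _) (subsetUl _ _) (ltac:(by rewrite disjoint_sym)) girthH.
rewrite -X_mem in y1_xs; rewrite -Y_mem in x1_ys.
rewrite -X_edges -Y_edges in cc'_disj *.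
have xs2_pos : 0 < size xs2 by lia.
have ys2_pos : 0 < size ys2 by lia.
have [p1_uniq p2_uniq p12_disj p12_edges] :=
  closed_walks_swap_tails X_uniq Y_uniq x1_ys y1_xs xs2_pos ys2_pos cc'_disj.
exists (rcons (rcons (x1 :: xs2) v) y1), (rcons (rcons (y1 :: ys2) v) x1).
have size_tails : (size xs2).+3 = (2 * k).+1 /\ (size ys2).+3 = (2 * k).+1.
  by lia.
by case: size_tails; rewrite /is_path_seq !size_rcons /= => -> ->.
Qed.
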